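(* Let $\mathcal{E}$ be an elliptic curve over $\mathbb{F}_q$ given by a smooth Weierstrass cubic $E(x,y,z)=0$ in $\mathbb{P}^2$, let $n'\ge1$, $l\ge1$, and let $R_1,\dots,R_{3n'+l}$ be distinct points of $\mathcal{E}(\mathbb{F}_q)$ with $(3n'+l)\times D$ evaluation matrix $\mathcal{M}$ and left kernel $\mathcal{K}$. (i) If there is a homogeneous polynomial $F$ of degree $n'$, not divisible by $E$, whose zero set contains $3n'$ of the points $R_1,\dots,R_{3n'+l}$, then $\mathcal{K}$ contains a nonzero vector $v$ having at least $l$ zero entries (namely zero in the positions of the remaining $l$ points). (ii) Conversely, if $\mathcal{K}$ contains a nonzero vector $v$ with at least $l$ zero entries, then for any set $S$ of $3n'$ indices containing all indices $r$ with $v_r\neq0$, there is a homogeneous polynomial of degree $n'$, not divisible by $E$, vanishing at all points $R_r$, $r\in S$.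
   Context: Notation: fix $n'\ge1$, let $D=\binom{n'+2}{2}$, and fix an ordering of the $D$ monomials $x^iy^jz^k$ with $i+j+k=n'$. For a point $R=(x_0:y_0:z_0)\in\mathbb{P}^2(\mathbb{F}_q)$ with a fixed choice of homogeneous coordinates, let $\overline{R}\in\mathbb{F}_q^D$ be the row vector of values $x_0^iy_0^jz_0^k$ in this ordering. The evaluation matrix of points $R_1,\dots,R_N$ is the $N\times D$ matrix $\mathcal{M}$ whose $r$-th row is $\overline{R_r}$; its left kernel is $\mathcal{K}=\{v\in\mathbb{F}_q^N: v\mathcal{M}=0\}$. *)

From HB Require Import structures.
From mathcomp Require Import all_boot all_order all_algebra all_field.
Set Implicit Arguments. Unset Strict Implicit. Unset Printing Implicit Defensive.
Import Order.TTheory GRing.Theory Num.Theory.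
Local Open Scope ring_scope.

(* Polynomials in three variables x, y, z over K, represented as nested
   univariate polynomials: the outer variable is z, the middle one y,
   the inner one x.  The coefficient of x^i y^j z^k in p is ((p`_k)`_j)`_i. *)
Definition mpoly (K : fieldType) := {poly {poly {poly K}}}.

Definition varX (K : fieldType) : mpoly K := (('X : {poly K})%:P)%:P.
Definition varY (K : fieldType) : mpoly K := ('X : {poly {poly K}})%:P.
Definition varZ (K : fieldType) : mpoly K := 'X.
Definition cst (K : fieldType) (c : K) : mpoly K := ((c%:P)%:P)%:P.

Definition eval3 (K : fieldType) (p : mpoly K) (x y z : K) : K :=
  ((p.[(z%:P)%:P]).[y%:P]).[x].

(* p is homogeneous of degree n (the zero polynomial counts as homogeneous) *)
Definition homogeneous (K : fieldType) (n : nat) (p : mpoly K) : Prop :=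
  forall i j k : nat, ((p`_k)`_j)`_i != 0 -> (i + j + k)%N = n.

Definition mdivides (K : fieldType) (e f : mpoly K) : Prop :=
  exists g : mpoly K, f = e * g.

Definition weierstrass (K : fieldType) (a1 a2 a3 a4 a6 : K) : mpoly K :=
  let X := varX K in let Y := varY K in let Z := varZ K in
  Y ^+ 2 * Z + cst a1 * X * Y * Z + cst a3 * Y * Z ^+ 2
  - X ^+ 3 - cst a2 * X ^+ 2 * Z - cst a4 * X * Z ^+ 2 - cst a6 * Z ^+ 3.

(* Discriminant of the Weierstrass equation; smooth iff it is nonzero. *)
Definition wdisc (K : fieldType) (a1 a2 a3 a4 a6 : K) : K :=
  let b2 := a1 ^+ 2 + 4%:R * a2 in
  let b4 := 2%:R * a4 + a1 * a3 in
  let b6 := a3 ^+ 2 + 4%:R * a6 in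
  let b8 := a1 ^+ 2 * a6 + 4%:R * a2 * a6 - a1 * a3 * a4 + a2 * a3 ^+ 2 - a4 ^+ 2 in
  - b2 ^+ 2 * b8 - 8%:R * b4 ^+ 3 - 27%:R * b6 ^+ 2 + 9%:R * b2 * b4 * b6.

(* projective points given by homogeneous coordinates *)
Definition pt (K : Type) := (K * K * K)%type.
Definition px (K : Type) (P : pt K) := P.1.1.
Definition py (K : Type) (P : pt K) := P.1.2.
Definition pz (K : Type) (P : pt K) := P.2.

Definition pt_nonzero (K : fieldType) (P : pt K) : Prop :=
  ~ [/\ px P = 0, py P = 0 & pz P = 0].

Definition proj_eq (K : fieldType) (P Q : pt K) : Prop :=
  exists c : K, [/\ c != 0, px Q = c * px P, py Q = c * py P & pz Q = c * pz P].

(* Fixed ordering of the D = 'C(n+2,2) monomials x^i y^j z^k, i+j+k = n: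
   lexicographic in (i, j). *)
Definition monos (n : nat) : seq (nat * nat * nat) :=
  flatten [seq [seq (i, j, (n - i - j)%N) | j <- iota 0 (n - i).+1] | i <- iota 0 n.+1].

Definition Dim (n : nat) : nat := 'C(n.+2, 2).

Definition evrow (K : fieldType) (n : nat) (P : pt K) : 'rV[K]_(Dim n) :=
  \row_(m < Dim n)
    let e := nth (0%N, 0%N, 0%N) (monos n) m in
    px P ^+ e.1.1 * py P ^+ e.1.2 * pz P ^+ e.2.

Definition evmx (K : fieldType) (n N : nat) (R : 'I_N -> pt K) : 'M[K]_(N, Dim n) :=
  \matrix_(r < N, m < Dim n) evrow n (R r) ord0 m.

Definition in_left_kernel (K : fieldType) (N D : nat) (M : 'M[K]_(N, D)) (v : 'rV[K]_N) : Prop :=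
  v *m M = 0.

(* On the cubic E the monomial x^3 is congruent modulo E to a combination of
   monomials of x-degree at most 2, so every form of degree n is congruent modulo
   E to a combination of the 3n reduced monomials x^i y^j z^k with i <= 2, and a
   nonzero such combination is not a multiple of E, since a multiple E * G with
   G <> 0 has x-degree at least 3.  Hence on points of E the evaluation matrix
   factors as V * Rho, where V is its submatrix formed by the columns of the
   reduced monomials.  For a set S of 3n of the points, a form of degree n not
   divisible by E vanishes on S iff the square submatrix of V on the rows of S
   is singular, iff this submatrix has a nonzero left kernel vector; extended by
   zero outside S, the latter are exactly the left kernel vectors of the
   evaluation matrix supported in S. *)

From HB Require Import structures.
From mathcomp Require Import all_boot all_order all_algebra all_field.
From mathcomp Require Import zify ring.
Import Order.TTheory GRing.Theory Num.Theory.
Local Open Scope ring_scope.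
Set Implicit Arguments. Unset Strict Implicit.

Lemma size_monos n : size (monos n) = Dim n.
Proof.
rewrite /monos /Dim size_allpairs_dep.
elim: n => [//|n IH].
have -> : iota 0 n.+2 = 0 :: map (addn 1) (iota 0 n.+1) by rewrite -iotaDl.
have sumn_cons a s : sumn (a :: s) = (a + sumn s)%N by [].
rewrite map_cons -map_comp sumn_cons.
rewrite (eq_map (g := fun i => size (iota 0 (n - i).+1))) => [|i /=]; last first.
  by rewrite !size_iota; congr S; lia.
by rewrite IH size_iota [in RHS]binS bin1; lia.
Qed.

Lemma mem_monos n e : (e \in monos n) = (e.1.1 + e.1.2 + e.2 == n)%N.
Proof.
rewrite /monos; apply/allpairsPdep/eqP => [[i [j [hi hj ->]]]|].
  by move: hi hj; rewrite !mem_iota /=; lia.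
case: e => [[i j] k] <-; exists i, j; rewrite !mem_iota /=.
by split; [lia | lia | congr (_, _, _); lia].
Qed.

(* Exponents [(i, j, k)] of degree [n] with [i <= 2], enumerated by [t < 3 n]:
   first the [n + 1] with [i = 0], then the [n] with [i = 1], then the
   [n - 1] with [i = 2]. *)
Definition rexp (n t : nat) : nat * nat * nat :=
  if (t <= n)%N then (0%N, t, (n - t)%N)
  else if (t <= n.*2)%N then (1%N, (t - n.+1)%N, (n - 1 - (t - n.+1))%N)
  else (2%N, (t - n.*2.+1)%N, (n - 2 - (t - n.*2.+1))%N).

Lemma rexp_sum n t : (t < 3 * n)%N ->
  ((rexp n t).1.1 + (rexp n t).1.2 + (rexp n t).2 = n)%N.
Proof. by rewrite /rexp; case: ifP => /=; [|case: ifP => /=]; lia. Qed.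

Lemma rexp_le2 n t : ((rexp n t).1.1 <= 2)%N.
Proof. by rewrite /rexp; case: ifP => //; case: ifP. Qed.

Lemma rexp_inj n t t' : (t < 3 * n)%N -> (t' < 3 * n)%N ->
  rexp n t = rexp n t' -> t = t'.
Proof.
pose index (e : nat * nat * nat) :=
  match e.1.1 with 0 => e.1.2 | 1 => n.+1 + e.1.2 | _ => n.*2.+1 + e.1.2 end%N.
have rexpK u : (u < 3 * n)%N -> index (rexp n u) = u.
  by rewrite /index /rexp; case: ifP => /=; [|case: ifP => /=]; lia.
by move=> ht ht' e; rewrite -(rexpK t ht) -(rexpK t' ht') e.
Qed.

Lemma rexp_surj n i j k : (1 <= n)%N -> (i <= 2)%N -> (i + j + k = n)%N ->
  exists2 t, (t < 3 * n)%N & rexp n t = (i, j, k).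
Proof.
move=> hn hi hs; rewrite /rexp.
have : (i = 0 \/ i = 1 \/ i = 2)%N by lia.
case=> [|[|]] ei; subst i.
- exists j; first lia.
  by rewrite ifT; [congr (_, _, _)|]; lia.
- exists (n.+1 + j)%N; first lia.
  by rewrite ifF ?ifT; [congr (_, _, _)| |]; lia.
- exists (n.*2.+1 + j)%N; first lia.
  by rewrite ifF ?ifF; [congr (_, _, _)| |]; lia.
Qed.

Section Polynomials.
Variable K : fieldType.
Implicit Types (p q : mpoly K) (c x y z : K).

Definition mono (i j k : nat) : mpoly K := varX K ^+ i * varY K ^+ j * varZ K ^+ k.

Definition monoval (e : nat * nat * nat) (P : pt K) : K :=
  px P ^+ e.1.1 * py P ^+ e.1.2 * pz P ^+ e.2.

Lemma monoE i j k : mono i j k = (('X^i : {poly K})%:P * 'X^j)%:P * 'X^k.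
Proof. by rewrite /mono /varX /varY /varZ rmorphM /= !rmorphXn. Qed.

Lemma coef_mono i j k a b d :
  (((mono i j k)`_d)`_b)`_a = ((a == i) && (b == j) && (d == k))%:R.
Proof.
rewrite monoE coefMXn; case: ltnP => hd.
  by rewrite !coef0 (_ : d == k = false) ?andbF //; apply/eqP; lia.
rewrite coefC; case: eqP => hdk; last first.
  by rewrite !coef0 (_ : d == k = false) ?andbF //; apply/eqP; lia.
rewrite (_ : d == k) ?andbT; last by apply/eqP; lia.
rewrite coefMXn; case: ltnP => hb.
  by rewrite !coef0 (_ : b == j = false) ?andbF //; apply/eqP; lia.
rewrite coefC; case: eqP => hbj; last first.
  by rewrite coef0 (_ : b == j = false) ?andbF //; apply/eqP; lia.
by rewrite (_ : b == j) ?andbT ?coefXn //; apply/eqP; lia.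
Qed.

Lemma cst0 : cst (0 : K) = 0. Proof. by rewrite /cst !rmorph0. Qed.
Lemma cst1 : cst (1 : K) = 1. Proof. by rewrite /cst !rmorph1. Qed.
Lemma cstN c : cst (- c) = - cst c. Proof. by rewrite /cst !rmorphN. Qed.
Lemma cstD c c' : cst (c + c') = cst c + cst c'. Proof. by rewrite /cst !rmorphD. Qed.
Lemma cstM c c' : cst (c * c') = cst c * cst c'. Proof. by rewrite /cst !rmorphM. Qed.

Lemma coef_cstM c p i j k : (((cst c * p)`_k)`_j)`_i = c * ((p`_k)`_j)`_i.
Proof. by rewrite /cst !coefCM. Qed.

Lemma eval3D p q x y z : eval3 (p + q) x y z = eval3 p x y z + eval3 q x y z.
Proof. by rewrite /eval3 !hornerD. Qed.

Lemma eval3M p q x y z : eval3 (p * q) x y z = eval3 p x y z * eval3 q x y z.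
Proof. by rewrite /eval3 !hornerM. Qed.

Lemma eval3_cst c x y z : eval3 (cst c) x y z = c.
Proof. by rewrite /eval3 /cst !hornerC. Qed.

Lemma eval3_sum I (r : seq I) (P : pred I) (F : I -> mpoly K) x y z :
  eval3 (\sum_(i <- r | P i) F i) x y z = \sum_(i <- r | P i) eval3 (F i) x y z.
Proof. by rewrite /eval3 !horner_sum. Qed.

Lemma eval3_mono i j k (P : pt K) :
  eval3 (mono i j k) (px P) (py P) (pz P) = monoval (i, j, k) P.
Proof.
by rewrite /mono /monoval !eval3M /eval3 /varX /varY /varZ !horner_exp !(hornerC, hornerX).
Qed.

Lemma mpoly_decomp p :
  p = \sum_(k < size p) \sum_(j < size p`_k) \sum_(i < size (p`_k)`_j)
        cst (((p`_k)`_j)`_i) * mono i j k.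
Proof.
rewrite -[p in LHS]coefK poly_def; apply: eq_bigr => k _.
rewrite -[p`_k in LHS]coefK poly_def -mul_polyC rmorph_sum big_distrl.
apply: eq_bigr => j _.
rewrite -[p`_k`_j in LHS]coefK poly_def -mul_polyC rmorph_sum big_distrl /=.
rewrite rmorph_sum big_distrl /=.
by apply: eq_bigr => i _; rewrite monoE /cst -!mul_polyC !rmorphM /= !mulrA.
Qed.

End Polynomials.

Section XSize.
Variable K : fieldType.
Implicit Types p q : mpoly K.

Definition xsize_leq (d : nat) p := forall k j, leq (size ((p`_k)`_j)) d.

Lemma xsize_leq0 d : xsize_leq d 0.
Proof. by move=> k j; rewrite !coef0 size_poly0. Qed.

Lemma xsize_leqW d d' p : (d <= d')%N -> xsize_leq d p -> xsize_leq d' p.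
Proof. by move=> hd hp k j; apply: leq_trans (hp k j) hd. Qed.

Lemma xsize_leqD d p q : xsize_leq d p -> xsize_leq d q -> xsize_leq d (p + q).
Proof.
move=> hp hq k j; rewrite !coefD; apply: leq_trans (size_polyD _ _) _.
by rewrite geq_max hp hq.
Qed.

Lemma xsize_leqN d p : xsize_leq d p -> xsize_leq d (- p).
Proof. by move=> hp k j; rewrite !coefN size_polyN. Qed.

Lemma xsize_leq_cstM d c p : xsize_leq d p -> xsize_leq d (cst c * p).
Proof.
move=> hp k j; rewrite /cst !coefCM; apply: leq_trans (size_mul_leq _ _) _.
by have := hp k j; have := size_polyC_leq1 c; lia.
Qed.

Lemma xsize_leq_sum d I (r : seq I) (P : pred I) (F : I -> mpoly K) :
  (forall i, P i -> xsize_leq d (F i)) -> xsize_leq d (\sum_(i <- r | P i) F i).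
Proof. by move=> hF; apply: big_ind => //; [apply: xsize_leq0 | apply: xsize_leqD]. Qed.

Lemma xsize_leq_mono d i j k : (i < d)%N -> xsize_leq d (mono K i j k).
Proof.
move=> hi c b; apply/leq_sizeP => a ha; rewrite coef_mono.
by rewrite (_ : a == i = false) //; apply/eqP; lia.
Qed.

Lemma xsize_leq_monoM d i j k p :
  xsize_leq d p -> xsize_leq (d + i) (mono K i j k * p).
Proof.
move=> hp c b; rewrite monoE -mulrA coefCM coefXnM.
case: ltnP => _; first by rewrite mulr0 coef0 size_poly0.
rewrite -mulrA coefCM coefXnM; case: ltnP => _; first by rewrite mulr0 size_poly0.
apply: leq_trans (size_mul_leq _ _) _; rewrite size_polyXn.
by have := hp (c - k)%N (b - j)%N; lia.
Qed.

Lemma xsize_leq_xcubeM d p :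
  xsize_leq (d + 3) (mono K 3 0 0 * p) -> xsize_leq d p.
Proof.
move=> h k j; have := h k j.
rewrite monoE -mulrA coefCM coefXnM ltn0 subn0 -mulrA coefCM coefXnM ltn0 subn0.
have [->|nz] := eqVneq ((p`_k)`_j) 0; first by rewrite size_poly0.
by rewrite mulrC size_mulXn //; lia.
Qed.

Lemma xsize_leq0_eq0 p : xsize_leq 0 p -> p = 0.
Proof.
move=> hp; apply/polyP => k; rewrite coef0; apply/polyP => j; rewrite coef0.
by apply/eqP; rewrite -size_poly_eq0 -leqn0 hp.
Qed.

Lemma xsize_leq_exists p : exists d, xsize_leq d p.
Proof.
pose sz k j := size ((p`_k)`_j); pose sk k := size p`_k.
exists (\max_(k < size p) \max_(j < sk k) sz k j)%N => k j.
case: (ltnP k (size p)) => hk; last by rewrite (nth_default 0 hk) coef0 size_poly0.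
case: (ltnP j (size p`_k)) => hj; last by rewrite (nth_default 0 hj) size_poly0.
by apply: leq_trans (leq_bigmax (Ordinal hk)); exact: (leq_bigmax (Ordinal hj)).
Qed.

End XSize.

Section ReducedPolynomials.
Variables (K : fieldType) (n : nat).

Definition rmono (t : 'I_(3 * n)) : mpoly K :=
  mono K (rexp n t).1.1 (rexp n t).1.2 (rexp n t).2.

Definition rpoly (c : 'cV[K]_(3 * n)) : mpoly K := \sum_t cst (c t 0) * rmono t.

Lemma coef_rpoly c i j k :
  (((rpoly c)`_k)`_j)`_i = \sum_t c t 0 * (rexp n t == (i, j, k))%:R.
Proof.
rewrite /rpoly !coef_sum; apply: eq_bigr => t _; rewrite coef_cstM coef_mono.
case: (rexp n t) => [[u v] w].
by rewrite !xpair_eqE ![_ == u]eq_sym ![_ == v]eq_sym ![_ == w]eq_sym.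
Qed.

Lemma coef_rpoly_rexp c (t : 'I_(3 * n)) :
  (((rpoly c)`_(rexp n t).2)`_(rexp n t).1.2)`_(rexp n t).1.1 = c t 0.
Proof.
rewrite coef_rpoly -!surjective_pairing (bigD1 t) //= eqxx mulr1 big1 ?addr0 // => u.
move=> ne; rewrite (_ : (rexp n u == rexp n t) = false) ?mulr0 //.
by apply: contraNF ne => /eqP e; apply/eqP/ord_inj/(rexp_inj (ltn_ord u) (ltn_ord t) e).
Qed.

Lemma rpoly_eq0 c : (rpoly c == 0) = (c == 0).
Proof.
apply/eqP/eqP => [c0|->]; last first.
  by rewrite /rpoly big1 // => t _; rewrite mxE cst0 mul0r.
by apply/colP => t; rewrite mxE -coef_rpoly_rexp c0 !coef0.
Qed.

Lemma rpoly_homogeneous c : homogeneous n (rpoly c).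
Proof.
move=> i j k; rewrite coef_rpoly.
have [t /eqP e _|nrexp] := pickP (fun t : 'I_(3 * n) => rexp n t == (i, j, k)).
  by have := rexp_sum (ltn_ord t); rewrite e.
by rewrite big1 ?eqxx // => t _; rewrite nrexp mulr0.
Qed.

Lemma rpoly_xsize c : xsize_leq 3 (rpoly c).
Proof.
apply: xsize_leq_sum => t _; apply: xsize_leq_cstM; apply: xsize_leq_mono.
exact: rexp_le2.
Qed.

Lemma eval3_rpoly c (P : pt K) :
  eval3 (rpoly c) (px P) (py P) (pz P) = \sum_t c t 0 * monoval (rexp n t) P.
Proof.
rewrite eval3_sum; apply: eq_bigr => t _.
by rewrite eval3M eval3_cst eval3_mono -!surjective_pairing.
Qed.

End ReducedPolynomials.

Section Reduction.
Variables (K : fieldType) (a1 a2 a3 a4 a6 : K).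
Let E := weierstrass a1 a2 a3 a4 a6.

Lemma xcube_weierstrass :
  mono K 3 0 0 = mono K 0 2 1 + cst a1 * mono K 1 1 1 + cst a3 * mono K 0 1 2
    - cst a2 * mono K 2 0 1 - cst a4 * mono K 1 0 2 - cst a6 * mono K 0 0 3 - E.
Proof.
rewrite /E /weierstrass /mono.
move: (varX K) (varY K) (varZ K) (cst a1) (cst a2) (cst a3) (cst a4) (cst a6).
by move=> X Y Z c1 c2 c3 c4 c6; ring.
Qed.

Lemma mono_xcubeM i j k :
  mono K (i + 3) j k = mono K i (j + 2) (k + 1) + cst a1 * mono K (i + 1) (j + 1) (k + 1)
    + cst a3 * mono K i (j + 1) (k + 2) + cst (- a2) * mono K (i + 2) j (k + 1)
    + cst (- a4) * mono K (i + 1) j (k + 2) + cst (- a6) * mono K i j (k + 3)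
    + E * (cst (-1) * mono K i j k).
Proof.
rewrite /E /weierstrass /mono !exprD !cstN cst1.
move: (varX K) (varY K) (varZ K) (cst a1) (cst a2) (cst a3) (cst a4) (cst a6).
by move=> X Y Z c1 c2 c3 c4 c6; ring.
Qed.

Lemma weierstrass_mul_xsize G : xsize_leq 3 (E * G) -> G = 0.
Proof.
move=> hEG; have [d hd] := xsize_leq_exists G.
apply: xsize_leq0_eq0; elim: d hd => [//|d IH] hd; apply/IH/xsize_leq_xcubeM.
have hmono i j k : (i <= 2)%N -> xsize_leq (d + 3) (mono K i j k * G).
  by move=> hi; apply: (xsize_leqW (d := (d.+1 + i)%N)); [lia | exact: xsize_leq_monoM].
have hcmono c i j k : (i <= 2)%N -> xsize_leq (d + 3) (cst c * mono K i j k * G).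
  by move=> hi; rewrite -mulrA; apply/xsize_leq_cstM/hmono.
rewrite xcube_weierstrass mulrBl.
apply: xsize_leqD; last by apply/xsize_leqN/(xsize_leqW _ hEG); lia.
rewrite !mulrBl !mulrDl.
do 3 (apply: xsize_leqD; last by apply/xsize_leqN/hcmono).
by do 2 (apply: xsize_leqD; last exact: hcmono); apply: hmono.
Qed.

Lemma rpoly_not_divisible n (c : 'cV_(3 * n)) : c != 0 -> ~ mdivides E (rpoly c).
Proof.
move=> + [G eG]; rewrite -rpoly_eq0 eG.
have -> : G = 0 by apply: weierstrass_mul_xsize; rewrite -eG; exact: rpoly_xsize.
by rewrite mulr0 eqxx.
Qed.

Variables (n : nat) (n_gt0 : (0 < n)%N).

Definition reducible (p : mpoly K) := exists G (c : 'cV_(3 * n)), p = E * G + rpoly c.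

Lemma reducible0 : reducible 0.
Proof.
exists 0, 0; rewrite mulr0 add0r /rpoly big1 // => t _.
by rewrite mxE cst0 mul0r.
Qed.

Lemma reducibleD p q : reducible p -> reducible q -> reducible (p + q).
Proof.
case=> [G [c ->]] [G' [c' ->]]; exists (G + G'), (c + c').
rewrite mulrDr addrACA /rpoly -big_split; congr (_ + _); apply: eq_bigr => t _.
by rewrite mxE cstD mulrDl.
Qed.

Lemma reducible_cstM a p : reducible p -> reducible (cst a * p).
Proof.
case=> [G [c ->]]; exists (cst a * G), (a *: c).
rewrite mulrDr mulrCA /rpoly mulr_sumr; congr (_ + _); apply: eq_bigr => t _.
by rewrite mxE cstM mulrA.
Qed.

Lemma reducible_weierstrassM q : reducible (E * q).
Proof. by exists q, 0; rewrite /rpoly big1 ?addr0 // => t _; rewrite mxE cst0 mul0r. Qed.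

Lemma reducible_rmono i j k : (i <= 2)%N -> (i + j + k = n)%N -> reducible (mono K i j k).
Proof.
move=> hi hs; have [t ht et] := rexp_surj n_gt0 hi hs.
exists 0, (delta_mx (Ordinal ht) 0); rewrite mulr0 add0r /rpoly (bigD1 (Ordinal ht)) //=.
rewrite big1 => [|u /negbTE u_neq]; last by rewrite mxE u_neq cst0 mul0r.
by rewrite mxE !eqxx cst1 mul1r addr0 /rmono /= et.
Qed.

Lemma reducible_mono i j k : (i + j + k = n)%N -> reducible (mono K i j k).
Proof.
elim: i {-2}i (leqnn i) j k => [|b IH] i hib j k hs.
  by apply: reducible_rmono => //; lia.
have [hi2|hi3] := leqP i 2; first exact: reducible_rmono.
have red u v w : (u <= i - 3 + 2)%N -> (u + v + w = n)%N -> reducible (mono K u v w).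
  by move=> hu huvw; apply: IH huvw; lia.
rewrite (_ : i = i - 3 + 3)%N; last lia.
rewrite mono_xcubeM; apply: reducibleD; last exact: reducible_weierstrassM.
by repeat apply: reducibleD; try apply: reducible_cstM; apply: red; lia.
Qed.

Lemma reducible_sum I (r : seq I) (P : pred I) (F : I -> mpoly K) :
  (forall i, P i -> reducible (F i)) -> reducible (\sum_(i <- r | P i) F i).
Proof. by move=> hF; apply: big_ind => //; [exact: reducible0 | exact: reducibleD]. Qed.

Lemma reducible_homogeneous p : homogeneous n p -> reducible p.
Proof.
move=> hp; rewrite (mpoly_decomp p).
apply: reducible_sum => k _; apply: reducible_sum => j _; apply: reducible_sum => i _.
have [->|/hp hs] := eqVneq (((p`_k)`_j)`_i) 0.
  by rewrite cst0 mul0r; exact: reducible0.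
exact/reducible_cstM/reducible_mono.
Qed.

End Reduction.

Lemma rindex_subproof n (t : 'I_(3 * n)) : (index (rexp n t) (monos n) < Dim n)%N.
Proof. by rewrite -size_monos index_mem mem_monos rexp_sum. Qed.

Definition rindex n (t : 'I_(3 * n)) : 'I_(Dim n) := Ordinal (rindex_subproof t).

Section EvaluationMatrix.
Variables (K : fieldType) (n N : nat) (R : 'I_N -> pt K).

Definition rvalmx : 'M[K]_(N, 3 * n) := \matrix_(r, t) monoval (rexp n t) (R r).

Lemma rvalmx_colsub : rvalmx = colsub (@rindex n) (evmx n R).
Proof. by apply/matrixP => r t; rewrite !mxE nth_index // mem_monos rexp_sum. Qed.

Lemma eval3_rpoly_rvalmx c r :
  eval3 (rpoly c) (px (R r)) (py (R r)) (pz (R r)) = (rvalmx *m c) r 0.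
Proof. by rewrite eval3_rpoly !mxE; apply: eq_bigr => t _; rewrite mxE mulrC. Qed.

Variables (a1 a2 a3 a4 a6 : K) (n_gt0 : (0 < n)%N).
Let E := weierstrass a1 a2 a3 a4 a6.
Hypothesis R_on_curve : forall r, eval3 E (px (R r)) (py (R r)) (pz (R r)) = 0.

Lemma eval3_reducible_on_curve G c r :
  eval3 (E * G + rpoly c) (px (R r)) (py (R r)) (pz (R r)) = (rvalmx *m c) r 0.
Proof. by rewrite eval3D eval3M R_on_curve mul0r add0r eval3_rpoly_rvalmx. Qed.

Lemma evmx_factor : exists Rho : 'M_(3 * n, Dim n), evmx n R = rvalmx *m Rho.
Proof.
pose e (m : 'I_(Dim n)) := nth (0, 0, 0)%N (monos n) m.
have /fin_all_exists [rho hrho] : forall m, exists c : 'cV_(3 * n),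
    exists G, mono K (e m).1.1 (e m).1.2 (e m).2 = E * G + rpoly c.
  move=> m; have : e m \in monos n by rewrite mem_nth // size_monos.
  rewrite mem_monos => /eqP he.
  by have [G [c eG]] := reducible_mono a1 a2 a3 a4 a6 n_gt0 he; exists c, G.
exists (\matrix_(t, m) rho m t 0); apply/matrixP => r m.
have [G eG] := hrho m.
transitivity (eval3 (mono K (e m).1.1 (e m).1.2 (e m).2) (px (R r)) (py (R r)) (pz (R r))).
  by rewrite eval3_mono !mxE.
rewrite eG eval3_reducible_on_curve !mxE.
by apply: eq_bigr => t _; rewrite [X in _ = _ * X]mxE.
Qed.

End EvaluationMatrix.

Section Restriction.
Variables (K : fieldType) (N : nat) (S : {set 'I_N}).

(* [w *m extmx] extends [w] by zero outside [S]. *)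
Definition extmx : 'M[K]_(#|S|, N) := rowsub enum_val 1%:M.

Lemma extmxE m (A : 'M[K]_(N, m)) : extmx *m A = rowsub enum_val A.
Proof. by rewrite -rowsubE. Qed.

Lemma colsub_extmx (w : 'rV[K]_#|S|) : colsub enum_val (w *m extmx) = w.
Proof.
rewrite -mulmx_colsub -[RHS]mulmx1; congr (_ *m _); apply/matrixP => s s'.
by rewrite !mxE (inj_eq enum_val_inj).
Qed.

Lemma extmx_colsub (v : 'rV[K]_N) :
  (forall r, r \notin S -> v 0 r = 0) -> colsub enum_val v *m extmx = v.
Proof.
move=> vS; apply/rowP => r; rewrite !mxE; under eq_bigr do rewrite !mxE.
rewrite -(big_enum_val (fun x => v 0 x * (x == r)%:R)) /=.
have [rS|rNS] := boolP (r \in S).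
  rewrite (bigD1 r) //= eqxx mulr1 big1 ?addr0 // => x /andP[_ /negbTE ->].
  exact: mulr0.
rewrite vS // big1 // => x xS; rewrite (_ : x == r = false) ?mulr0 //.
by apply: contraNF rNS => /eqP <-.
Qed.

Lemma extmx_supp (w : 'rV[K]_#|S|) r : r \notin S -> (w *m extmx) 0 r = 0.
Proof.
move=> rNS; rewrite !mxE big1 // => s _; rewrite !mxE (_ : _ == r = false) ?mulr0 //.
by apply: contraNF rNS => /eqP <-; exact: enum_valP.
Qed.

End Restriction.

Arguments extmx {K N} S.

Lemma left_kernel_of_right_kernel (F : fieldType) m k (A : 'M[F]_(m, k)) (x : 'cV_k) :
  (k <= m)%N -> x != 0 -> A *m x = 0 -> exists2 w : 'rV_m, w != 0 & w *m A = 0.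
Proof.
move=> km x0 Ax0.
have nfree : ~~ row_free A^T.
  apply: contra x0 => free.
  by rewrite -trmx_eq0 -(mulmx_free_eq0 _ free) -trmx_mul Ax0 trmx0.
have : kermx A != 0.
  rewrite kermx_eq0 -row_leq_rank; move: nfree; rewrite /row_free mxrank_tr.
  by have := rank_leq_col A; lia.
by case/rowV0Pn => w /sub_kermxP wA w0; exists w.
Qed.

Section VanishingForms.
Variables (K : fieldType) (a1 a2 a3 a4 a6 : K) (n N : nat) (R : 'I_N -> pt K).
Variable S : {set 'I_N}.
Let E := weierstrass a1 a2 a3 a4 a6.
Let vanishes_on_S (F : mpoly K) :=
  forall r, r \in S -> eval3 F (px (R r)) (py (R r)) (pz (R r)) = 0.

Lemma kernel_vanishing_form (c : 'cV_(3 * n)) :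
  c != 0 -> extmx S *m rvalmx n R *m c = 0 ->
  exists F, [/\ homogeneous n F, ~ mdivides E F & vanishes_on_S F].
Proof.
move=> c0 Bc; exists (rpoly c); split; [exact: rpoly_homogeneous | exact: rpoly_not_divisible |].
move=> r rS; rewrite eval3_rpoly_rvalmx -[r](enum_rankK_in rS rS).
move: Bc; rewrite -mulmxA extmxE => /colP/(_ (enum_rank_in rS r)).
by rewrite !mxE.
Qed.

Lemma left_kernel_vanishing_form (v : 'rV_N) :
  #|S| = (3 * n)%N -> v != 0 -> v *m evmx n R = 0 ->
  (forall r, r \notin S -> v 0 r = 0) ->
  exists F, [/\ homogeneous n F, ~ mdivides E F & vanishes_on_S F].
Proof.
move=> hS v0 vM vS; pose w := colsub enum_val v : 'rV_#|S|.
have w0 : w^T != 0.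
  by rewrite trmx_eq0; apply: contraNneq v0 => w0; rewrite -(extmx_colsub vS) -/w w0 mul0mx.
have BwT : (extmx S *m rvalmx n R)^T *m w^T = 0.
  by rewrite -trmx_mul mulmxA extmx_colsub // rvalmx_colsub mulmx_colsub vM raddf0 trmx0.
have [c c0 cB] := left_kernel_of_right_kernel (eq_leq hS) w0 BwT.
apply: (kernel_vanishing_form (c := c^T)); first by rewrite trmx_eq0.
by rewrite -[LHS]trmxK trmx_mul trmxK cB trmx0.
Qed.

Hypothesis n_gt0 : (0 < n)%N.
Hypothesis R_on_curve : forall r, eval3 E (px (R r)) (py (R r)) (pz (R r)) = 0.

Lemma vanishing_form_kernel F :
  homogeneous n F -> ~ mdivides E F -> vanishes_on_S F ->
  exists2 c : 'cV_(3 * n), c != 0 & extmx S *m rvalmx n R *m c = 0.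
Proof.
move=> hF hnd hFS; have [G [c eF]] := reducible_homogeneous a1 a2 a3 a4 a6 n_gt0 hF.
exists c.
  apply/eqP => c0; apply: hnd; exists G.
  have /eqP rc0 : rpoly c == 0 by rewrite rpoly_eq0 c0.
  by rewrite eF rc0 addr0.
apply/colP => s; rewrite -mulmxA extmxE mxE [RHS]mxE.
by rewrite -(eval3_reducible_on_curve R_on_curve G) -eF; apply/hFS/enum_valP.
Qed.

Lemma vanishing_form_left_kernel F :
  #|S| = (3 * n)%N -> homogeneous n F -> ~ mdivides E F -> vanishes_on_S F ->
  exists2 v : 'rV_N, v != 0 & v *m evmx n R = 0 /\ forall r, r \notin S -> v 0 r = 0.
Proof.
move=> hS hF hnd hFS; have [c c0 Bc] := vanishing_form_kernel hF hnd hFS.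
have [w w0 wB] := left_kernel_of_right_kernel (eq_leq (esym hS)) c0 Bc.
have [Rho ->] := evmx_factor n_gt0 R_on_curve.
exists (w *m extmx S); last by split; [rewrite mulmxA -(mulmxA w) wB mul0mx | exact: extmx_supp].
by apply: contraNneq w0 => v0; rewrite -(colsub_extmx w) v0 raddf0.
Qed.

End VanishingForms.

Lemma card_zeros_supported (K : fieldType) m l (v : 'rV[K]_(m + l)) (T : {set 'I_(m + l)}) :
  #|T| = m -> (forall r, r \notin T -> v 0 r = 0) -> (l <= #|[set r | v ord0 r == 0%R]|)%N.
Proof.
move=> hT vT; apply: leq_trans (_ : #|~: T| <= _)%N.
  by have := cardsC T; rewrite card_ord hT; lia.
by apply/subset_leq_card/subsetP => r; rewrite in_setC inE => /vT ->.
Qed.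

Unset Implicit Arguments. Set Strict Implicit.

Theorem mainTheorem4 (K : finFieldType) (a1 a2 a3 a4 a6 : K) (n l : nat)
  (R : 'I_(3 * n + l) -> pt K) :
  wdisc a1 a2 a3 a4 a6 != 0 ->
  (1 <= n)%N -> (1 <= l)%N ->
  (forall r, pt_nonzero (R r)) ->
  (forall r, eval3 (weierstrass a1 a2 a3 a4 a6) (px (R r)) (py (R r)) (pz (R r)) = 0) ->
  (forall r s, r != s -> ~ proj_eq (R r) (R s)) ->
  (* (i) *)
  (forall (F : mpoly K) (T : {set 'I_(3 * n + l)}),
      homogeneous n F ->
      ~ mdivides (weierstrass a1 a2 a3 a4 a6) F ->
      #|T| = (3 * n)%N ->
      (forall r, r \in T -> eval3 F (px (R r)) (py (R r)) (pz (R r)) = 0) ->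
      exists v : 'rV[K]_(3 * n + l),
        [/\ v != 0, in_left_kernel (evmx n R) v,
            (l <= #|[set r | v ord0 r == 0%R]|)%N
          & forall r, r \notin T -> v ord0 r = 0%R])
  /\
  (* (ii) *)
  (forall v : 'rV[K]_(3 * n + l),
      v != 0 -> in_left_kernel (evmx n R) v ->
      (l <= #|[set r | v ord0 r == 0%R]|)%N ->
      forall S : {set 'I_(3 * n + l)},
        #|S| = (3 * n)%N ->
        (forall r, v ord0 r != 0%R -> r \in S) ->
        exists F : mpoly K,
          [/\ homogeneous n F, ~ mdivides (weierstrass a1 a2 a3 a4 a6) F
            & forall r, r \in S -> eval3 F (px (R r)) (py (R r)) (pz (R r)) = 0]).
Proof.
move=> _ n_gt0 _ _ R_on_curve _; split.
- move=> F T hF hnd hT hFT.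
  have [v v0 [vM vT]] := vanishing_form_left_kernel n_gt0 R_on_curve hT hF hnd hFT.
  by exists v; split => //; apply: card_zeros_supported hT vT.
- move=> v v0 vM _ S hS hsupp.
  apply: (left_kernel_vanishing_form a1 a2 a3 a4 a6 hS v0 vM) => r.
  by apply: contraNeq; apply: hsupp.
Qed.
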